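(* Let $(E,\le,u)$ be an ordered effect space with pointed positive cone. Let $A$ be a finite set of positive subunital linear maps on $E$ that is closed under composition. If every $T\in A$ is persistent, then every $T\in A$ is unital, i.e. $T(u)=u$.
   Context: An ordered effect space is a triple $(E,\le,u)$: $E$ a real vector space, $\le$ a preorder on $E$ compatible with addition and multiplication by nonnegative scalars, and $u\in E_+=\{x: x\ge0\}$ a distinguished unit. The cone $E_+$ is pointed if $E_+\cap(-E_+)=\{0\}$. A linear map $T:E\to E$ is positive if $T(E_+)\subseteq E_+$, subunital if $T(u)\le u$, unital if $T(u)=u$. A positive map $T$ is persistent if for every $x\in E_+\setminus\{0\}$ one has $T(x)\in E_+\setminus\{0\}$ (i.e. $T$ annihilates no nonzero positive element). *)

From HB Require Import structures.
From mathcomp Require Import all_boot all_order all_algebra.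
From mathcomp Require Import boolp classical_sets cardinality reals.
Set Implicit Arguments. Unset Strict Implicit. Unset Printing Implicit Defensive.
Import Order.TTheory GRing.Theory Num.Theory.
Local Open Scope ring_scope.

Section Effect.
Context {R : realType} {E : lmodType R}.

Definition ordered_effect_space (le : E -> E -> Prop) (u : E) : Prop :=
  [/\ (forall x, le x x),
      (forall x y z, le x y -> le y z -> le x z),
      (forall x y z, le x y -> le (x + z) (y + z)),
      (forall (a : R) x y, 0 <= a -> le x y -> le (a *: x) (a *: y))
    & le 0 u].

Definition pointed_cone (le : E -> E -> Prop) : Prop :=
  forall x, le 0 x -> le 0 (- x) -> x = 0.

Definition positive_map (le : E -> E -> Prop) (T : E -> E) : Prop :=
  forall x, le 0 x -> le 0 (T x).

Definition subunital (le : E -> E -> Prop) (u : E) (T : E -> E) : Prop :=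
  le (T u) u.

Definition unital (u : E) (T : E -> E) : Prop := T u = u.

Definition persistent (le : E -> E -> Prop) (T : E -> E) : Prop :=
  forall x, le 0 x -> x <> 0 -> le 0 (T x) /\ T x <> 0.

End Effect.

From HB Require Import structures.
From mathcomp Require Import all_boot all_order all_algebra.
From mathcomp Require Import boolp classical_sets cardinality reals.
Import Order.TTheory GRing.Theory Num.Theory.
Local Open Scope classical_set_scope.
Local Open Scope ring_scope.

(* Finiteness of A makes the powers of T eventually periodic: T^a = T^b with
   a < b.  Monotonicity and subunitality then give
   T^(a+1) u = T^(b+1) u <= T^(a+2) u <= T^(a+1) u, so the positive element
   u - T u is sent to an element of E_+ /\ -E_+ = {0} by T^(a+1), which is
   persistent because it lies in A; hence u - T u = 0. *)

Lemma pigeonhole_nat {T : Type} {A : set T} {f : nat -> T} :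
  finite_set A -> (forall j, A (f j)) -> exists a b, (a < b)%N /\ f a = f b.
Proof.
move=> finA Af; apply: contra_notP infinite_nat => noncollision.
have injf : {in [set: nat] &, injective f}.
  move=> a b _ _ fab; case: (ltngtP a b) => // ab; exfalso; apply: noncollision.
  - by exists a, b.
  - by exists b, a.
rewrite -(eq_finite_set (inj_card_eq injf)).
by apply: sub_finite_set finA => _ [j _ <-].
Qed.

Lemma iter_comp_closed {X : Type} {A : set (X -> X)} {T : X -> X} :
  (forall S1 S2, A S1 -> A S2 -> A (S1 \o S2)) -> A T ->
  forall j, A (iter j.+1 T).
Proof.
move=> compA AT; elim=> [|j IHj].
  by have -> : iter 1 T = T by apply: funext.
have -> : iter j.+2 T = T \o iter j.+1 T by apply: funext.
exact: compA.
Qed.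

Lemma linearB_fun {R : pzRingType} {U V : lmodType R} (f : U -> V) :
  linear f -> forall x y, f (x - y) = f x - f y.
Proof.
move=> linf x y; have := linf (-1) y x.
by rewrite !scaleN1r => linfN; rewrite addrC linfN addrC.
Qed.

Section PreorderedVectorSpace.
Context {R : realType} {E : lmodType R} {le : E -> E -> Prop}.
Hypothesis refl_le : forall x, le x x.
Hypothesis trans_le : forall x y z, le x y -> le y z -> le x z.
Hypothesis leD2r : forall x y z, le x y -> le (x + z) (y + z).

Lemma subr_ge0P x y : le 0 (y - x) <-> le x y.
Proof.
split=> [/(leD2r _ _ x)|/(leD2r _ _ (- x))]; first by rewrite add0r subrK.
by rewrite subrr.
Qed.

Lemma pointed_cone_antisym : pointed_cone le ->
  forall x y, le x y -> le y x -> x = y.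
Proof.
move=> pointed x y /subr_ge0P xy /subr_ge0P yx; apply/eqP.
by rewrite eq_sym -subr_eq0 (pointed _ xy) // opprB.
Qed.

Lemma persistent_linear_cancel (S : E -> E) :
  persistent le S -> linear S ->
  forall x y, le y x -> S x = S y -> x = y.
Proof.
move=> persS linS x y /subr_ge0P yx Sxy.
apply/eqP; rewrite -subr_eq0; apply/negPn/negP => /eqP nz.
by have [_] := persS _ yx nz; rewrite linearB_fun // Sxy subrr.
Qed.

Context {T : E -> E}.
Hypotheses (linT : linear T) (posT : positive_map le T).

Lemma positive_linear_monotone {x y} : le x y -> le (T x) (T y).
Proof. by move=> /subr_ge0P /posT; rewrite linearB_fun // => /subr_ge0P. Qed.

Lemma iter_monotone j x y : le x y -> le (iter j T x) (iter j T y).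
Proof. by elim: j => [//|j IHj] /IHj /positive_linear_monotone. Qed.

Context {u : E}.
Hypothesis subT : subunital le u T.

Lemma iter_subunital j : le (iter j T u) u.
Proof.
elim: j => [|j IHj]; first exact: refl_le.
rewrite iterS; exact: trans_le _ _ _ (positive_linear_monotone IHj) subT.
Qed.

Lemma subunital_orbit_stationary {a b} : pointed_cone le ->
  (a < b)%N -> iter a T u = iter b T u -> iter a T u = iter a.+1 T u.
Proof.
move=> pointed ab periodic; apply: pointed_cone_antisym => //.
  rewrite periodic -(subnKC ab) iterD.
  by apply: iter_monotone; apply: iter_subunital.
by rewrite iterSr; apply: iter_monotone.
Qed.

End PreorderedVectorSpace.

Theorem theorem4p13 (R : realType) (E : lmodType R)
    (le : E -> E -> Prop) (u : E) (A : set (E -> E)) :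
  ordered_effect_space le u ->
  pointed_cone le ->
  finite_set A ->
  (forall T, A T -> [/\ linear T, positive_map le T & subunital le u T]) ->
  (forall S T, A S -> A T -> A (S \o T)) ->
  (forall T, A T -> persistent le T) ->
  forall T, A T -> unital u T.
Proof.
move=> [refl_le trans_le leD2r _ _] pointed finA HA compA persA T AT.
have [linT posT subT] := HA T AT.
have iterA := iter_comp_closed compA AT.
have [a [b [ab periodic]]] := pigeonhole_nat finA iterA.
have stationary : iter a.+1 T u = iter a.+2 T u.
  apply: (subunital_orbit_stationary refl_le trans_le leD2r linT posT subT
            pointed (ab : a.+1 < b.+1)%N).
  by rewrite periodic.
have [linS _ _] := HA _ (iterA a).
apply/esym/(persistent_linear_cancel leD2r _ (persA _ (iterA a)) linS _ _ subT).
by rewrite -iterSr.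
Qed.
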